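(* Let $X\in\mathbb{R}^{n\times d}$, $y\in\mathbb{R}^n$, and let $g:\mathbb{R}^d\to(-\infty,\infty]$ be a proper lower semicontinuous convex function with $g(k\beta)=kg(\beta)$ for all $k\ge0$, $\beta\in\mathbb{R}^d$, such that there exists $\beta\in\mathrm{relint}(\mathrm{dom}(g))$ and $P(\beta):=\frac12\|y-X\beta\|_2^2+g(\beta)$ attains its infimum. Let $D(\theta)=-\frac12\|\theta\|_2^2+y^\top\theta-g^\star(X^\top\theta)$ be the Fenchel–Rockafellar dual objective and $\hat\theta$ a maximizer of $D$. Let $\tilde\beta\in\mathbb{R}^d$ and $\tilde\theta\in\mathrm{dom}(D)$. Then $\hat\theta$ belongs to \[ \mathcal{R}^{\mathrm{DS}}(\tilde\beta,\tilde\theta):=\Big\{\theta\ \Big|\ \Big\|\theta-\tfrac12(\tilde\theta+y)\Big\|_2^2\le\tfrac14\|\tilde\theta-y\|_2^2\ \land\ 0\le g(\tilde\beta)-\theta^\top X\tilde\beta\Big\}. \]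
   Context: $g^\star(v)=\sup_\beta v^\top\beta-g(\beta)$ is the Fenchel conjugate; $\mathrm{dom}(h)=\{z:|h(z)|<\infty\}$; $\mathrm{relint}$ is relative interior. *)

From HB Require Import structures.
From mathcomp Require Import all_boot all_order all_algebra.
From mathcomp Require Import all_classical all_reals all_analysis.
Set Implicit Arguments. Unset Strict Implicit. Unset Printing Implicit Defensive.
Import Order.TTheory GRing.Theory Num.Theory.
Import numFieldNormedType.Exports.
Local Open Scope classical_set_scope.
Local Open Scope ring_scope.

Definition dotv (R : realType) (n : nat) (u v : 'cV[R]_n) : R :=
  \sum_(i < n) u i 0 * v i 0.
Definition sqnorm (R : realType) (n : nat) (u : 'cV[R]_n) : R := dotv u u.

Definition edom (R : realType) (n : nat) (h : 'cV[R]_n -> \bar R) : set 'cV[R]_n :=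
  [set z | h z \is a fin_num].

Definition proper_fun (R : realType) (n : nat) (g : 'cV[R]_n -> \bar R) : Prop :=
  (forall b, g b != -oo%E) /\ (exists b, g b \is a fin_num).

Definition convex_efun (R : realType) (n : nat) (g : 'cV[R]_n -> \bar R) : Prop :=
  forall (a b : 'cV[R]_n) (t : R), 0 < t < 1 ->
    (g (t *: a + (1 - t) *: b)%R <= t%:E * g a + (1 - t)%:E * g b)%E.

Definition lsc_efun (R : realType) (n : nat) (g : 'cV[R]_n -> \bar R) : Prop :=
  forall a : R, closed [set b | (g b <= a%:E)%E].

Definition pos_homogeneous (R : realType) (n : nat) (g : 'cV[R]_n -> \bar R) : Prop :=
  forall (k : R) (b : 'cV[R]_n), 0 <= k -> g (k *: b)%R = (k%:E * g b)%E.

Definition affine_hull (R : realType) (n : nat) (C : set 'cV[R]_n) : set 'cV[R]_n :=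
  [set x | exists (m : nat) (pts : 'I_m -> 'cV[R]_n) (w : 'I_m -> R),
     (forall i, C (pts i)) /\ \sum_(i < m) w i = 1 /\ x = \sum_(i < m) w i *: pts i].

Definition relint (R : realType) (n : nat) (C : set 'cV[R]_n) : set 'cV[R]_n :=
  [set x | C x /\ exists e : R, 0 < e /\
     (forall z, affine_hull C z -> sqnorm (z - x) < e -> C z)].

Definition fconj (R : realType) (n : nat) (g : 'cV[R]_n -> \bar R) (v : 'cV[R]_n) : \bar R :=
  ereal_sup [set ((dotv v b)%:E - g b)%E | b in [set: 'cV[R]_n]].

Definition primal (R : realType) (n d : nat) (X : 'M[R]_(n, d)) (y : 'cV[R]_n)
  (g : 'cV[R]_d -> \bar R) (b : 'cV[R]_d) : \bar R :=
  ((sqnorm (y - X *m b) / 2)%:E + g b)%E.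

Definition dual (R : realType) (n d : nat) (X : 'M[R]_(n, d)) (y : 'cV[R]_n)
  (g : 'cV[R]_d -> \bar R) (th : 'cV[R]_n) : \bar R :=
  ((- (sqnorm th / 2) + dotv y th)%:E - fconj g (X^T *m th))%E.

From HB Require Import structures.
From mathcomp Require Import all_boot all_order all_algebra.
From mathcomp Require Import all_classical all_reals all_analysis.
From mathcomp Require Import ring lra.
Set Implicit Arguments. Unset Strict Implicit.
Import Order.TTheory GRing.Theory Num.Theory.
Local Open Scope classical_set_scope.
Local Open Scope ring_scope.

(* Positive homogeneity turns g^* into the indicator of the convex set
   K = {v | v^T b <= g b for all b}, so the dual objective is the strongly
   concave quadratic -1/2 ||th||^2 + y^T th restricted to {th | X^T th \in K}.
   The second condition is X^T th_hat \in K tested at beta_t, and the first is,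
   after completing the square, the first-order optimality condition
   (th_hat - y)^T (theta_t - th_hat) >= 0 of th_hat against the feasible theta_t. *)

Lemma affine_ge0_at0 (R : realFieldType) (a b : R) :
  (forall t, 0 < t <= 1 -> 0 <= a + t * b) -> 0 <= a.
Proof.
move=> ge0_on; rewrite leNgt; apply/negP => a_lt0.
pose t := - a / (- a + `|b|).
have den_gt0 : 0 < - a + `|b| by rewrite ltr_wpDr // oppr_gt0.
have t_gt0 : 0 < t by rewrite divr_gt0 // oppr_gt0.
have t_le1 : t <= 1 by rewrite ler_pdivrMr // mul1r lerDl.
have t_den : t * (- a + `|b|) = - a by rewrite mulfVK ?gt_eqF.
have := ge0_on t; rewrite t_gt0 t_le1 => /(_ isT).
have : t * b <= t * `|b| by rewrite ler_pM2l // ler_norm.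
nra.
Qed.

Section Dot.
Variables (R : realType) (m : nat).
Implicit Types (u v w : 'cV[R]_m).

Lemma dotvZr u v k : dotv u (k *: v) = k * dotv u v.
Proof. by rewrite /dotv mulr_sumr; apply: eq_bigr => i _; rewrite mxE mulrCA. Qed.

Lemma dotv0r u : dotv u 0 = 0.
Proof. by rewrite -(scale0r 0) dotvZr mul0r. Qed.

Lemma dotv_segmentl u v w t :
  dotv (u + t *: (v - u)) w = dotv u w + t * (dotv v w - dotv u w).
Proof.
rewrite /dotv -sumrB mulr_sumr -big_split.
by apply: eq_bigr => i _; rewrite !mxE /=; ring.
Qed.

Lemma sqnorm_sub_midpoint u v w :
  sqnorm (u - 2^-1 *: (v + w)) = 4^-1 * sqnorm (v - w) - dotv (u - w) (v - u).
Proof.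
rewrite /sqnorm /dotv mulr_sumr -sumrB.
by apply: eq_bigr => i _; rewrite !mxE; field.
Qed.

End Dot.

Lemma dotv_trmx (R : realType) (n d : nat) (X : 'M[R]_(n, d)) th b :
  dotv (X^T *m th) b = dotv th (X *m b).
Proof.
have dotvE m (u v : 'cV[R]_m) : dotv u v = (u^T *m v) 0 0.
  by rewrite mxE; apply: eq_bigr => i _; rewrite mxE.
by rewrite !dotvE trmx_mul trmxK mulmxA.
Qed.

Section LinearMinorant.
Variables (R : realType) (m : nat) (g : 'cV[R]_m -> \bar R).

Definition linear_minorant (v : 'cV[R]_m) : Prop :=
  forall b, ((dotv v b)%:E <= g b)%E.

Lemma linear_minorant_segment u v t : 0 <= t <= 1 ->
  linear_minorant u -> linear_minorant v -> linear_minorant (u + t *: (v - u)).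
Proof.
move=> /andP[t0 t1] gu gv b; rewrite dotv_segmentl.
move: (gu b) (gv b); case: (g b) => [r| |] //=; rewrite ?leey // !lee_fin.
by move=> ur vr; nra.
Qed.

Hypothesis g_hom : pos_homogeneous g.

Lemma pos_homogeneous0 : g 0 = 0%E.
Proof. by rewrite -(scale0r (0 : 'cV[R]_m)) g_hom // mul0e. Qed.

Lemma fconj_linear_minorant v : linear_minorant v -> fconj g v = 0%E.
Proof.
move=> gv; apply/le_anti/andP; split.
  apply: ge_ereal_sup => _ [b _ <-].
  by move: (gv b); case: (g b) => [r| |] //=; rewrite ?leNye // -EFinB !lee_fin subr_le0.
apply: ereal_sup_ubound; exists 0 => //.
by rewrite pos_homogeneous0 dotv0r sube0.
Qed.

Lemma linear_minorant_fconj v : fconj g v != +oo%E -> linear_minorant v.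
Proof.
move=> gv_fin b; rewrite leNgt; apply/negP => gb_lt.
move/eqP: gv_fin; apply; apply: eq_infty => c.
have conj_ge k : 0 <= k -> ((k * dotv v b)%:E - k%:E * g b <= fconj g v)%E.
  move=> k0; rewrite -dotvZr -g_hom //.
  by apply: ereal_sup_ubound; exists (k *: b).
move: gb_lt; case gb: (g b) => [r| |] //= gap; last first.
  by have := conj_ge 1 ler01; rewrite gb mul1e /= leye_eq => /eqP ->; rewrite leey.
rewrite lte_fin -subr_gt0 in gap.
have := conj_ge (`|c| / (dotv v b - r)); rewrite gb -EFinM -EFinB -mulrBr.
rewrite mulfVK ?gt_eqF // => /(_ (divr_ge0 (normr_ge0 c) (ltW gap))).
by apply: le_trans; rewrite lee_fin ler_norm.
Qed.
End LinearMinorant.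


Section Dual.
Variables (R : realType) (n d : nat) (X : 'M[R]_(n, d)) (y : 'cV[R]_n).
Variable g : 'cV[R]_d -> \bar R.
Hypothesis g_hom : pos_homogeneous g.

Definition dual_quadratic (th : 'cV[R]_n) : R := - (sqnorm th / 2) + dotv y th.

Lemma dual_quadratic_segment a b t :
  dual_quadratic (a + t *: (b - a)) =
  dual_quadratic a - t * (dotv (a - y) (b - a) + t * (sqnorm (b - a) / 2)).
Proof.
rewrite /dual_quadratic /sqnorm /dotv !mulr_suml -!sumrN -!big_split /=.
rewrite !mulr_sumr -big_split mulr_sumr -sumrB.
by apply: eq_bigr => i _; rewrite !mxE /=; field.
Qed.

Lemma dual_linear_minorant th : linear_minorant g (X^T *m th) ->
  dual X y g th = (dual_quadratic th)%:E.
Proof. by move=> gth; rewrite /dual fconj_linear_minorant // sube0. Qed.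

Lemma linear_minorant_dual th : dual X y g th != -oo%E ->
  linear_minorant g (X^T *m th).
Proof.
move=> dual_gt; apply: linear_minorant_fconj => //.
by apply: contra dual_gt => /eqP conj_oo; rewrite /dual conj_oo.
Qed.

Lemma dual_max_first_order th_hat th :
  (forall th', (dual X y g th' <= dual X y g th_hat)%E) ->
  linear_minorant g (X^T *m th_hat) -> linear_minorant g (X^T *m th) ->
  0 <= dotv (th_hat - y) (th - th_hat).
Proof.
move=> th_hat_max g_hat g_th.
apply: (@affine_ge0_at0 _ _ (sqnorm (th - th_hat) / 2)) => t /andP[t_gt0 t_le1].
have g_seg : linear_minorant g (X^T *m (th_hat + t *: (th - th_hat))).
  rewrite mulmxDr -scalemxAr mulmxBr.
  by apply: linear_minorant_segment; rewrite ?(ltW t_gt0).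
have := th_hat_max (th_hat + t *: (th - th_hat)).
by rewrite !dual_linear_minorant // lee_fin dual_quadratic_segment gerBl pmulr_rge0.
Qed.

End Dual.

Theorem theorem6 (R : realType) (n d : nat) (X : 'M[R]_(n, d)) (y : 'cV[R]_n)
  (g : 'cV[R]_d -> \bar R)
  (g_proper : proper_fun g) (g_lsc : lsc_efun g) (g_convex : convex_efun g)
  (g_hom : pos_homogeneous g)
  (relint_ne : exists b, relint (edom g) b)
  (P_attains : exists b0, forall b, (primal X y g b0 <= primal X y g b)%E)
  (theta_hat : 'cV[R]_n)
  (theta_hat_max : forall th, (dual X y g th <= dual X y g theta_hat)%E)
  (beta_t : 'cV[R]_d) (theta_t : 'cV[R]_n)
  (theta_t_dom : edom (dual X y g) theta_t) :
  sqnorm (theta_hat - 2^-1 *: (theta_t + y)) <= 4^-1 * sqnorm (theta_t - y) /\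
  (0%:E <= g beta_t - (dotv theta_hat (X *m beta_t))%:E)%E.
Proof.
have dual_t_fin : dual X y g theta_t != -oo%E.
  by move: theta_t_dom; rewrite /edom /= fin_numE => /andP[].
have dual_hat_fin : dual X y g theta_hat != -oo%E.
  apply: contraTneq dual_t_fin => dual_hat_oo.
  by have := theta_hat_max theta_t; rewrite dual_hat_oo leeNy_eq negbK.
have g_t := linear_minorant_dual g_hom dual_t_fin.
have g_hat := linear_minorant_dual g_hom dual_hat_fin.
split.
  rewrite sqnorm_sub_midpoint gerBl.
  exact: dual_max_first_order theta_hat_max g_hat g_t.
by rewrite sube_ge0 ?fin_numE // -dotv_trmx g_hat.
Qed.
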